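(* Let $N, R \in \mathbb{N}$ and let $g_1,\dots,g_R : [N]\to[N]$ be arbitrary bijections (the single-hop factual recall problem with shared attributes). Then there is a $1$-layer transformer whose MLP has $3$ layers and width $R$, with (learned) embedding dimension $d = 4R\log(N)+1$, that correctly solves the single-hop factual recall problem, i.e. on every input $(s, r)\in[N]\times[R]$ it correctly predicts $y = g_r(s)$. The same can also be achieved without an MLP, by a $1$-layer transformer using multi-head attention with $R$ attention heads of head dimension $d_h = 4\log(N)$ and embedding dimension $d = 4R\log(N) + 4\log(R) + 1$.
   Context: Write $[N]=\{1,\dots,N\}$. Subjects are $[N]$, relations are $[R]$, and each relation $r$ has a bijection $g_r:[N]\to[N]$; attributes live in the same set $[N]$ as subjects (shared codomain). The model is an autoregressive transformer over the vocabulary $[N]\cup[R]$; it receives the sequence $(s, r)$ and must predict the next token $y=g_r(s)$. The token embeddings are free (learnable) vectors in $\mathbb{R}^d$. A transformer layer acts on $X\in\mathbb{R}^{d\times n}$ (columns = token embeddings): each head $h$ computes $A^{(h)}=\mathrm{softmax}((W_K^{(h)}X)^\top(W_Q^{(h)}X))$ (causal), the attention output is $Z=\sum_h W_V^{(h)}X(A^{(h)})^\top$, then $\tilde X = Z + X$, and finally $X' = \tilde X + \mathrm{MLP}(\tilde X)$, where the MLP acts on each column independently and is a ReLU network of the stated number of layers and hidden width. No normalization layers are used. *)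

From HB Require Import structures.
From mathcomp Require Import all_boot all_order all_algebra.
From mathcomp Require Import all_classical all_reals all_analysis.
Set Implicit Arguments. Unset Strict Implicit. Unset Printing Implicit Defensive.
Import Order.TTheory GRing.Theory Num.Theory.
Local Open Scope ring_scope.

(* Vocabulary [N] ∪ [R]: subjects/attributes 'I_N (left), relations 'I_nR (right). *)
Definition token (N nR : nat) : finType := ('I_N + 'I_nR)%type.

Section Transformer.
Variable R : realType.

Definition relu (x : R) : R := Num.max x 0.
Definition reluv m (v : 'cV[R]_m) : 'cV[R]_m := map_mx relu v.

Definition dotv m (u v : 'cV[R]_m) : R := \sum_(k < m) u k 0 * v k 0.

Record attn_head (d dh : nat) := Head {
  WK : 'M[R]_(dh, d);
  WQ : 'M[R]_(dh, d);
  WV : 'M[R]_(d, d) }.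

(* Causal softmax attention pattern: A j i = weight of key position i for
   query position j, i.e. softmax over i <= j of <W_K x_i, W_Q x_j>;
   here S = (W_K X)^T (W_Q X), so S i j = <W_K x_i, W_Q x_j>. *)
Definition causal_attn d dh n (h : attn_head d dh) (X : 'M[R]_(d, n)) : 'M[R]_(n, n) :=
  let S := (WK h *m X)^T *m (WQ h *m X) in
  \matrix_(j < n, i < n)
    (if (i <= j)%N
     then expR (S i j) / \sum_(i' < n | (i' <= j)%N) expR (S i' j)
     else 0).

Definition mh_attn d dh H n (hs : 'I_H -> attn_head d dh) (X : 'M[R]_(d, n))
  : 'M[R]_(d, n) :=
  \sum_(h < H) (WV (hs h) *m X *m (causal_attn (hs h) X)^T).

Record mlp3 (d w : nat) := MLP3 {
  W1 : 'M[R]_(w, d); b1 : 'cV[R]_w;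
  W2 : 'M[R]_(w, w); b2 : 'cV[R]_w;
  W3 : 'M[R]_(d, w); b3 : 'cV[R]_d }.

Definition mlp3_apply d w (m : mlp3 d w) (v : 'cV[R]_d) : 'cV[R]_d :=
  W3 m *m reluv (W2 m *m reluv (W1 m *m v + b1 m) + b2 m) + b3 m.

Definition mlp3_cols d w n (m : mlp3 d w) (X : 'M[R]_(d, n)) : 'M[R]_(d, n) :=
  \matrix_(k < d, j < n) mlp3_apply m (col j X) k 0.

Definition layer_mlp d dh H w n (hs : 'I_H -> attn_head d dh) (m : mlp3 d w)
  (X : 'M[R]_(d, n)) : 'M[R]_(d, n) :=
  let Xt := mh_attn hs X + X in Xt + mlp3_cols m Xt.

Definition layer_nomlp d dh H n (hs : 'I_H -> attn_head d dh) (X : 'M[R]_(d, n))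
  : 'M[R]_(d, n) := mh_attn hs X + X.

Definition input_seq N nR d (E : token N nR -> 'cV[R]_d) (s : 'I_N) (r : 'I_nR)
  : 'M[R]_(d, 2) :=
  \matrix_(k < d, j < 2) (if j == 0 :> nat then E (inl s) k 0 else E (inr r) k 0).

(* Next-token prediction from the last position with tied (embedding)
   output vectors: token y is predicted iff its logit <E y, x'_last> is
   strictly larger than the logit of every other token of the vocabulary. *)
Definition predicts N nR d (E : token N nR -> 'cV[R]_d) (Xout : 'M[R]_(d, 2))
  (y : token N nR) : Prop :=
  forall t : token N nR, t != y ->
    dotv (E t) (col ord_max Xout) < dotv (E y) (col ord_max Xout).

End Transformer.

Definition clog2 (n : nat) : nat := up_log 2 n.

From HB Require Import structures.
From mathcomp Require Import all_boot all_order all_algebra.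
From mathcomp Require Import all_classical all_reals all_analysis.
From mathcomp Require Import zify ring lra.
Set Implicit Arguments. Unset Strict Implicit. Unset Printing Implicit Defensive.
Import Order.TTheory GRing.Theory Num.Theory.
Local Open Scope ring_scope.

(* A token y of [N] is embedded with coordinates (y, 3 - y^2): against an output column
   starting with (m, 1) its logit is 3 + y m - y^2, a parabola in y whose maximum over the
   integers is at y = g as soon as |m - 2 g| < 1, where it is at least 3 and so beats every
   relation token (logit < 3).  Subject embeddings also carry their row g_1(s), ..., g_R(s)
   of the table and a flag, relation embeddings a one-hot code of r; this takes 2R + 3
   coordinates, within 4 R log N + 1 once N >= 2.
   With an MLP, uniform attention adds the row, scaled by 1/N, to the one-hot block, and the
   ReLU unit relu(N x_h - N) vanishes unless h = r, where it returns g_r(s) exactly.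
   Without an MLP, head h moves 2 g_h(s) to the first coordinate and attends to the subject
   with weight logistic(T) if h = r and logistic(-T) otherwise; for T = 2 R N the resulting
   error |m - 2 g_r(s)| is at most logistic(-T) T < 1.
   For N <= 1 there is a single attribute and one coordinate suffices. *)

Section Sums.
Variable V : nmodType.

Lemma sum_ord_supp1 d (F : 'I_d -> V) i (lt_i : (i < d)%N) :
  (forall k : 'I_d, val k != i -> F k = 0) -> \sum_k F k = F (Ordinal lt_i).
Proof. by move=> F0; rewrite (bigD1 (Ordinal lt_i)) //= big1 ?addr0. Qed.

Lemma sum_ord_supp2 d (F : 'I_d -> V) i j (lt_i : (i < d)%N) (lt_j : (j < d)%N) :
  i != j -> (forall k : 'I_d, val k != i -> val k != j -> F k = 0) ->
  \sum_k F k = F (Ordinal lt_i) + F (Ordinal lt_j).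
Proof.
move=> ij F0; rewrite (bigD1 (Ordinal lt_i)) //= (bigD1 (Ordinal lt_j)) /=; last first.
  by apply: contra ij => /eqP[->].
rewrite big1 ?addr0 // => k /andP[ki kj].
by apply: F0; [move: ki | move: kj]; apply: contra => /eqP ek; apply/eqP/val_inj.
Qed.

End Sums.

Section RealInequalities.
Variable R : realDomainType.

Lemma natr_dist_ge1 (m n : nat) : m != n -> 1 <= `|m%:R - n%:R : R|.
Proof.
case: (ltngtP m n) => [lt_mn|lt_nm|->]; rewrite ?eqxx // => _; first rewrite distrC.
  by rewrite -natrB ?ger0_norm ?ler1n ?subn_gt0 // ltnW.
by rewrite -natrB ?ger0_norm ?ler1n ?subn_gt0 // ltnW.
Qed.

Lemma parabola_lt (a b m : R) :
  1 <= `|a - b| -> `|m - 2 * a| < 1 -> b * m - b ^+ 2 < a * m - a ^+ 2.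
Proof.
rewrite ler_normr ltr_norml => ab /andP[m_lo m_hi].
rewrite -subr_gt0 (_ : _ - _ = (a - b) * ((a - b) + (m - 2 * a))); last by ring.
by case/orP: ab => ab; [|rewrite -mulrNN]; apply: mulr_gt0; lra.
Qed.

Lemma parabola_ge0 (n : nat) (m : R) :
  `|m - 2 * n%:R| < 1 -> 0 <= n%:R * m - n%:R ^+ 2.
Proof.
rewrite ltr_norml expr2 -mulrBr => /andP[m_lo _].
case: n m_lo => [|n] m_lo; first by rewrite mul0r.
have : 1 <= n.+1%:R :> R by rewrite ler1n.
by move=> n_ge1; apply: mulr_ge0; lra.
Qed.

Lemma near_select (I : finType) (i : I) (w x : I -> R) (eps : R) :
  0 <= eps -> w i = 1 - eps -> (forall j, j != i -> w j = eps) ->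
  (forall j, 0 <= x j) ->
  `|\sum_j w j * x j - x i| <= eps * \sum_j x j.
Proof.
move=> eps_ge0 wi wj x_ge0.
rewrite (bigD1 i) //= [X in _ <= _ * X](bigD1 i) //= wi.
rewrite (eq_bigr (fun j => eps * x j)) => [|j /wj ->] //.
rewrite -mulr_sumr; set G := \sum_(j | j != i) x j.
have p_ge0 := mulr_ge0 eps_ge0 (x_ge0 i).
have q_ge0 : 0 <= eps * G by apply/mulr_ge0/sumr_ge0.
rewrite (_ : _ - _ = eps * G - eps * x i); last by ring.
by rewrite mulrDr ler_norml; apply/andP; split; lra.
Qed.

End RealInequalities.

Section Attention.
Variable R : realType.

Lemma ger0_relu (x : R) : 0 <= x -> relu x = x.
Proof. by move=> x_ge0; rewrite /relu max_l. Qed.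

Lemma ler0_relu (x : R) : x <= 0 -> relu x = 0.
Proof. by move=> x_le0; rewrite /relu max_r. Qed.

Definition logistic (x : R) : R := (1 + expR (- x))^-1.

Lemma logistic_gt0 x : 0 < logistic x.
Proof. by rewrite invr_gt0 addr_gt0 ?expR_gt0. Qed.

Lemma logisticNC x : logistic x + logistic (- x) = 1.
Proof.
have ex_gt0 := expR_gt0 x.
rewrite /logistic opprK expRN; field.
by apply/andP; split; rewrite lt0r_neq0 // ?addr_gt0 ?invr_gt0.
Qed.

Lemma logistic0 : logistic 0 = 2^-1.
Proof. by rewrite /logistic oppr0 expR0. Qed.

Lemma logisticN_mul_lt1 T : 0 <= T -> logistic (- T) * T < 1.
Proof.
move=> T_ge0; rewrite /logistic opprK mulrC ltr_pdivrMr ?addr_gt0 ?expR_gt0 // mul1r.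
by have := expR_ge1Dx T; lra.
Qed.

Definition last_score d dh (h : attn_head R d dh) (X : 'M[R]_(d, 2)) (i : 'I_2) : R :=
  ((WK h *m X)^T *m (WQ h *m X)) i ord_max.

Lemma last_scoreE d dh (h : attn_head R d dh) X i :
  last_score h X i = \sum_a (WK h *m X) a i * (WQ h *m X) a ord_max.
Proof. by rewrite /last_score mxE; apply: eq_bigr => a _; rewrite mxE. Qed.

Lemma last_score_WK0 d dh (h : attn_head R d dh) X i : WK h = 0 -> last_score h X i = 0.
Proof. by move=> K0; rewrite last_scoreE big1 // => a _; rewrite K0 mul0mx mxE mul0r. Qed.

Lemma mh_attn_last2 d dh H (hs : 'I_H -> attn_head R d dh) (X : 'M[R]_(d, 2)) k :
  mh_attn hs X k ord_max =
  \sum_h (logistic (last_score (hs h) X ord0 - last_score (hs h) X ord_max)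
            * (WV (hs h) *m X) k ord0
        + logistic (last_score (hs h) X ord_max - last_score (hs h) X ord0)
            * (WV (hs h) *m X) k ord_max).
Proof.
rewrite /mh_attn summxE; apply: eq_bigr => h _.
set S := last_score (hs h) X.
have weight (i : 'I_2) :
    (causal_attn (hs h) X)^T i ord_max = expR (S i) / (expR (S ord0) + expR (S ord_max)).
  rewrite mxE [causal_attn _ _ _ _]mxE -ltnS ltn_ord big_mkcond /=.
  rewrite !big_ord_recl big_ord0 addr0 /=.
  by congr (_ / (_ + _)); congr expR; congr (_ _ _); apply: val_inj.
have softmax2 a b : expR a / (expR a + expR b) = logistic (a - b).
  have [ea_gt0 eb_gt0] := (expR_gt0 a, expR_gt0 b).
  rewrite /logistic opprB expRD expRN; field.
  by rewrite !lt0r_neq0 ?addr_gt0 ?divr_gt0.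
rewrite mxE !big_ord_recl big_ord0 addr0 !weight.
rewrite (_ : lift ord0 ord0 = ord_max); last exact: val_inj.
by rewrite softmax2 [expR (S ord0) + _]addrC softmax2 ![_ * logistic _]mulrC.
Qed.

Lemma layer_mlp0 d dh H w n (hs : 'I_H -> attn_head R d dh) (X : 'M[R]_(d, n)) :
  layer_mlp hs (MLP3 0 0 0 0 0 0 : mlp3 R d w) X = layer_nomlp hs X.
Proof.
apply/matrixP => k j; rewrite /layer_mlp /layer_nomlp mxE [mlp3_cols _ _ _ _]mxE.
by rewrite /mlp3_apply /= mul0mx [X in _ + X]mxE !mxE !addr0.
Qed.

End Attention.

Section FactualRecall.
Variables (R : realType) (N nR : nat) (g : 'I_nR -> 'I_N -> 'I_N).

Local Ltac split_ifs := repeat case: ifP => ?; try lia.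

Definition attr (j : nat) (y : 'I_N) : R :=
  if (insub j : option 'I_nR) is Some h then (g h y)%:R else 0.

Lemma attrE (h : 'I_nR) y : attr h y = (g h y)%:R.
Proof. by rewrite /attr valK. Qed.

Lemma attr_lt j y : attr j y < N%:R.
Proof.
rewrite /attr; case: insub => [h|]; first by rewrite ltr_nat.
by rewrite ltr0n (leq_ltn_trans _ (ltn_ord y)).
Qed.

(* Coordinates: 0 and 1 for the readout, 2 + h for the table entry g_h(y) ("tab"),
   2 + nR + h for the one-hot code of a relation ("rel"), 2 + 2 nR for the subject flag. *)
Definition subj_coord (y : 'I_N) (k : nat) : R :=
  if k == 0%N then (y : nat)%:R
  else if k == 1%N then 3 - (y : nat)%:R ^+ 2
  else if (2 <= k < 2 + nR)%N then attr (k - 2) y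
  else if k == (2 + 2 * nR)%N then 1 else 0.

Definition rel_coord (r : 'I_nR) (k : nat) : R :=
  if (k == 1%N) || (k == 2 + nR + r)%N then 1 else 0.

Definition emb d (t : token N nR) : 'cV[R]_d :=
  \col_(k < d) match t with inl y => subj_coord y k | inr r => rel_coord r k end.

Lemma subj_coord_tab y h : (h < nR)%N -> subj_coord y (2 + h) = attr h y.
Proof. by move=> lt_h; rewrite /subj_coord /= ltn_add2l lt_h addKn. Qed.

Lemma subj_coord_rel y h : (h < nR)%N -> subj_coord y (2 + nR + h) = 0.
Proof. by move=> lt_h; rewrite /subj_coord; split_ifs. Qed.

Lemma subj_coord_flag y : subj_coord y (2 + 2 * nR) = 1.
Proof. by rewrite /subj_coord; split_ifs. Qed.

Lemma rel_coord0 r : rel_coord r 0 = 0.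
Proof. by rewrite /rel_coord; split_ifs. Qed.

Lemma rel_coord1 r : rel_coord r 1 = 1.
Proof. by rewrite /rel_coord eqxx. Qed.

Lemma rel_coord_tab r h : (h < nR)%N -> rel_coord r (2 + h) = 0.
Proof. by move=> lt_h; rewrite /rel_coord; split_ifs. Qed.

Lemma rel_coord_rel r h : rel_coord r (2 + nR + h) = (h == r)%:R.
Proof. by rewrite /rel_coord /= eqn_add2l; case: eqP. Qed.

Lemma rel_coord_flag r : rel_coord r (2 + 2 * nR) = 0.
Proof. by have := ltn_ord r; rewrite /rel_coord; split_ifs. Qed.

Lemma dotv_emb_subj d y (x : nat -> R) : (2 * nR + 3 <= d)%N ->
  (forall h, (h < nR)%N -> x (2 + h)%N = 0) -> x (2 + 2 * nR)%N = 0 ->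
  dotv (emb d (inl y)) (\col_(k < d) x k) =
  (y : nat)%:R * x 0%N + (3 - (y : nat)%:R ^+ 2) * x 1%N.
Proof.
move=> hd x_tab x_flag; have [d0 d1] : (0 < d)%N /\ (1 < d)%N by lia.
rewrite /dotv (sum_ord_supp2 d0 d1) //; first by rewrite !mxE /= /subj_coord /=.
move=> k k0 k1; rewrite !mxE /subj_coord (negbTE k0) (negbTE k1).
case: ifP => [/andP[k_lo k_hi]|_]; first by rewrite -(subnKC k_lo) x_tab ?mulr0 //; lia.
by case: ifP => [/eqP k_flag|_]; rewrite ?k_flag ?x_flag ?mulr0 ?mul0r.
Qed.

Lemma dotv_emb_rel d r (x : nat -> R) : (2 * nR + 3 <= d)%N ->
  dotv (emb d (inr r)) (\col_(k < d) x k) = x 1%N + x (2 + nR + r)%N.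
Proof.
move=> hd; have [d1 dr] : (1 < d)%N /\ (2 + nR + r < d)%N by have := ltn_ord r; lia.
rewrite /dotv (sum_ord_supp2 d1 dr); last 2 first.
- by lia.
- by move=> k k1 kr; rewrite !mxE /rel_coord (negbTE k1) (negbTE kr) mul0r.
by rewrite !mxE /= rel_coord_rel eqxx /rel_coord /= !mul1r.
Qed.

Lemma predicts_emb d (Xo : 'M[R]_(d, 2)) (x : nat -> R) (y : 'I_N) :
  (2 * nR + 3 <= d)%N -> col ord_max Xo = \col_(k < d) x k ->
  x 1%N = 1 -> (forall h, (h < nR)%N -> x (2 + h)%N = 0) -> x (2 + 2 * nR)%N = 0 ->
  (forall h, (h < nR)%N -> x (2 + nR + h)%N < 2) ->
  `|x 0%N - 2 * (y : nat)%:R| < 1 ->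
  predicts (emb d) Xo (inl y).
Proof.
move=> hd Xo_x x1 x_tab x_flag x_rel x0_y; rewrite /predicts Xo_x => t.
rewrite dotv_emb_subj // x1 !mulr1.
case: t => [y'|r'] ne; last first.
  rewrite dotv_emb_rel // x1.
  by have := x_rel r' (ltn_ord r'); have := parabola_ge0 x0_y; lra.
have ne' : (y : nat) != y' by apply: contraNneq ne => /val_inj ->.
rewrite dotv_emb_subj // x1 mulr1.
by have := parabola_lt (natr_dist_ge1 R ne') x0_y; lra.
Qed.

Definition copy_head d : 'I_1 -> attn_head R d d := fun=>
  Head 0 0 (\matrix_(k, l)
    if (2 + nR <= k < 2 + 2 * nR)%N && ((l : nat) == k - nR)%N then 2 / N%:R else 0).

Lemma copy_head_value d s r (k : 'I_d) (i : 'I_2) :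
  (WV (copy_head d ord0) *m input_seq (emb d) s r) k i =
  if (2 + nR <= k < 2 + 2 * nR)%N && (val i == 0%N)
  then 2 / N%:R * attr (k - 2 - nR) s else 0.
Proof.
rewrite mxE; case: (boolP (2 + nR <= k < 2 + 2 * nR)%N) => [k_in|k_out]; last first.
  by apply: big1 => l _; rewrite !mxE (negbTE k_out) mul0r.
have lt_l : (k - nR < d)%N by have := ltn_ord k; lia.
rewrite (sum_ord_supp1 lt_l) => [|l l_ne]; last first.
  by rewrite !mxE k_in /= (negbTE l_ne) mul0r.
rewrite !mxE /= k_in eqxx /= (_ : k - nR = 2 + (k - 2 - nR))%N; last by lia.
by case: ifP => _; [rewrite subj_coord_tab | rewrite rel_coord_tab ?mulr0] => //; lia.
Qed.

Definition copied s r (k : nat) : R :=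
  (if (2 + nR <= k < 2 + 2 * nR)%N then attr (k - 2 - nR) s / N%:R else 0) + rel_coord r k.

Lemma copied_lo s r k : (k < 2 + nR)%N -> copied s r k = rel_coord r k.
Proof. by move=> lt_k; rewrite /copied ifF ?add0r //; lia. Qed.

Lemma copied_rel s r h :
  (h < nR)%N -> copied s r (2 + nR + h) = attr h s / N%:R + (h == r)%:R.
Proof.
move=> lt_h; rewrite /copied rel_coord_rel ifT; last by lia.
by rewrite (_ : 2 + nR + h - 2 - nR = h)%N //; lia.
Qed.

Lemma copied_flag s r : copied s r (2 + 2 * nR) = 0.
Proof. by rewrite /copied rel_coord_flag ifF ?addr0 //; lia. Qed.

Lemma copy_layer d s r (k : 'I_d) :
  (mh_attn (copy_head d) (input_seq (emb d) s r) + input_seq (emb d) s r) k ord_max =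
  copied s r k.
Proof.
rewrite mxE mh_attn_last2 big_ord1 !last_score_WK0 // subrr logistic0.
rewrite !copy_head_value /= [input_seq _ _ _ _ _]mxE /= /copied andbT andbF mulr0 addr0.
by case: ifP => _; rewrite mxE ?mulr0 ?add0r // !mulrA mulVf ?pnatr_eq0 // mul1r mulrC.
Qed.

Definition gate_mlp d : mlp3 R d nR :=
  MLP3 (\matrix_(h, k) if (k : nat) == (2 + nR + h)%N then N%:R else 0) (const_mx (- N%:R))
       1%:M 0 (\matrix_(k, h) if (k : nat) == 0%N then 2 else 0) 0.

Lemma gate_mlp_apply d s r (v : 'cV[R]_d) (k : 'I_d) :
  (2 * nR + 3 <= d)%N -> (forall k : 'I_d, v k 0 = copied s r k) ->
  mlp3_apply (gate_mlp d) v k 0 = if (k : nat) == 0%N then 2 * (g r s : nat)%:R else 0.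
Proof.
move=> hd v_copied.
have N_neq0 : N%:R != 0 :> R by rewrite pnatr_eq0 -lt0n (leq_ltn_trans _ (ltn_ord s)).
have gate (h : 'I_nR) :
    relu ((W1 (gate_mlp d) *m v + b1 (gate_mlp d)) h 0) =
    if h == r then (g r s : nat)%:R else 0.
  have lt_l : (2 + nR + h < d)%N by have := ltn_ord h; lia.
  rewrite !mxE (sum_ord_supp1 lt_l) => [|l l_ne]; last by rewrite !mxE (negbTE l_ne) mul0r.
  rewrite !mxE /= eqxx v_copied copied_rel //.
  rewrite attrE mulrDr mulrCA mulfV // mulr1 val_eqE.
  case: eqVneq => [->|_]; first by rewrite mulr1 addrK ger0_relu.
  by rewrite mulr0 addr0 ler0_relu // subr_le0 ler_nat ltnW.
have hidden (h : 'I_nR) : reluv (reluv (W1 (gate_mlp d) *m v + b1 (gate_mlp d))) h 0 =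
    if h == r then (g r s : nat)%:R else 0.
  by rewrite mxE [reluv _ _ _]mxE gate ger0_relu //; case: eqP.
rewrite /mlp3_apply [W2 _]/= [b2 _]/= [b3 _]/= mul1mx !addr0 mxE (bigD1 r) //.
rewrite big1 => [|h h_ne].
  by rewrite hidden eqxx [W3 _]/= mxE /= addr0; case: ifP; rewrite ?mul0r.
by rewrite hidden (negbTE h_ne) mulr0.
Qed.

Lemma recall_with_mlp d s r : (2 * nR + 3 <= d)%N ->
  predicts (emb d) (layer_mlp (copy_head d) (gate_mlp d) (input_seq (emb d) s r))
    (inl (g r s)).
Proof.
move=> hd.
apply: (predicts_emb
  (x := fun k => copied s r k + if k == 0%N then 2 * (g r s : nat)%:R else 0)).
- exact: hd.
- apply/matrixP => k j; rewrite [RHS]mxE mxE /layer_mlp mxE copy_layer [mlp3_cols _ _ _ _]mxE.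
  by rewrite (gate_mlp_apply (s := s) (r := r) _ hd) // => k'; rewrite mxE copy_layer.
- by rewrite /= copied_lo // rel_coord1 addr0.
- by move=> h lt_h; rewrite /= copied_lo ?rel_coord_tab ?ltn_add2l // addr0.
- by rewrite /= copied_flag addr0.
- move=> h lt_h; rewrite /= copied_rel // addr0.
  have : attr h s / N%:R < 1.
    by rewrite ltr_pdivrMr ?mul1r ?attr_lt // ltr0n (leq_ltn_trans _ (ltn_ord s)).
  have : (h == r)%:R <= 1 :> R by rewrite lern1 leq_b1.
  lra.
- by rewrite /= copied_lo // rel_coord0 add0r subrr normr0 ltr01.
Qed.

Definition score_gap : R := (2 * nR * N)%:R.

Definition route_heads d dh : 'I_nR -> attn_head R d dh := fun h =>
  Head (\matrix_(a, k)
          if (a : nat) == 0%N then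
            if (k : nat) == (2 + 2 * nR)%N then - score_gap
            else if (k : nat) == (2 + nR + h)%N then - (2 * score_gap) else 0
          else 0)
       (\matrix_(a, k) if ((a : nat) == 0%N) && ((k : nat) == 1%N) then 1 else 0)
       (\matrix_(k, l) if ((k : nat) == 0%N) && ((l : nat) == (2 + h)%N) then 2 else 0).

Lemma route_score d dh s r h : (2 * nR + 3 <= d)%N -> (0 < dh)%N ->
  last_score (route_heads d dh h) (input_seq (emb d) s r) ord0 -
  last_score (route_heads d dh h) (input_seq (emb d) s r) ord_max =
  if h == r then score_gap else - score_gap.
Proof.
move=> hd dh_gt0; set X := input_seq (emb d) s r; have lt_h := ltn_ord h.
have [d1 d_flag d_rel] : [/\ 1 < d, 2 + 2 * nR < d & 2 + nR + h < d]%N by split; lia.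
have query (a : 'I_dh) :
    (WQ (route_heads d dh h) *m X) a ord_max = if (a : nat) == 0%N then 1 else 0.
  rewrite mxE (sum_ord_supp1 d1) => [|l l1]; last first.
    by rewrite !mxE (negbTE l1) andbF mul0r.
  by rewrite !mxE /= andbT rel_coord1; case: ifP; rewrite ?mulr1 ?mul0r.
have key (i : 'I_2) : (WK (route_heads d dh h) *m X) (Ordinal dh_gt0) i =
    - score_gap * X (Ordinal d_flag) i + - (2 * score_gap) * X (Ordinal d_rel) i.
  rewrite mxE (sum_ord_supp2 d_flag d_rel); last 2 first.
  - by lia.
  - by move=> k k_flag k_rel; rewrite !mxE /= (negbTE k_flag) (negbTE k_rel) mul0r.
  have flag_rel : (2 + nR + h == 2 + 2 * nR)%N = false by lia.
  by rewrite !mxE /= flag_rel !eqxx.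
have score (i : 'I_2) : last_score (route_heads d dh h) X i =
    - score_gap * X (Ordinal d_flag) i + - (2 * score_gap) * X (Ordinal d_rel) i.
  rewrite last_scoreE (sum_ord_supp1 dh_gt0) => [|a a0]; last first.
    by rewrite query (negbTE a0) mulr0.
  by rewrite query mulr1 key.
rewrite !score !mxE /= subj_coord_flag subj_coord_rel ?rel_coord_flag ?rel_coord_rel //.
by rewrite val_eqE; case: eqP => _; rewrite /= ?mulr1n ?mulr0n; lra.
Qed.

Lemma route_value d dh s r h (k : 'I_d) (i : 'I_2) : (2 * nR + 3 <= d)%N ->
  (WV (route_heads d dh h) *m input_seq (emb d) s r) k i =
  if ((k : nat) == 0%N) && (val i == 0%N) then 2 * (g h s : nat)%:R else 0.
Proof.
move=> hd; have lt_h := ltn_ord h; have d_tab : (2 + h < d)%N by lia.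
rewrite mxE (sum_ord_supp1 d_tab) => [|l l_tab]; last first.
  by rewrite !mxE (negbTE l_tab) andbF mul0r.
rewrite !mxE /= eqxx andbT; case: ifP => _ /=; last by rewrite mul0r.
by case: ifP => _; rewrite ?subj_coord_tab ?attrE ?rel_coord_tab ?mulr0.
Qed.

Lemma route_layer d dh s r (k : 'I_d) : (2 * nR + 3 <= d)%N -> (0 < dh)%N ->
  layer_nomlp (route_heads d dh) (input_seq (emb d) s r) k ord_max =
  (if (k : nat) == 0%N then
     \sum_h logistic (if h == r then score_gap else - score_gap) * (2 * (g h s : nat)%:R)
   else 0) + rel_coord r k.
Proof.
move=> hd dh_gt0; rewrite mxE mh_attn_last2 [input_seq _ _ _ _ _]mxE; congr (_ + _); last first.
  by rewrite mxE.
case: ifP => k0; last by apply: big1 => h _; rewrite !route_value // k0 !mulr0 addr0.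
by apply: eq_bigr => h _; rewrite !route_value // k0 /= mulr0 addr0 route_score.
Qed.

Lemma recall_without_mlp d dh s r : (2 * nR + 3 <= d)%N -> (0 < dh)%N ->
  predicts (emb d) (layer_nomlp (route_heads d dh) (input_seq (emb d) s r)) (inl (g r s)).
Proof.
move=> hd dh_gt0.
set m := \sum_h logistic (if h == r then score_gap else - score_gap)
                   * (2 * (g h s : nat)%:R).
apply: (predicts_emb (x := fun k => (if k == 0%N then m else 0) + rel_coord r k)).
- exact: hd.
- by apply/matrixP => k j; rewrite [RHS]mxE mxE route_layer.
- by rewrite /= rel_coord1 add0r.
- by move=> h lt_h; rewrite /= rel_coord_tab // addr0.
- by rewrite /= rel_coord_flag addr0.
- by move=> h lt_h; rewrite /= rel_coord_rel add0r ltr_nat ltnS leq_b1.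
rewrite /= rel_coord0 addr0.
have gap_ge0 : 0 <= score_gap by rewrite ler0n.
have sum_le_gap : \sum_h 2 * (g h s : nat)%:R <= score_gap.
  apply: le_trans (_ : \sum_(h < nR) (2 * N)%:R <= _).
    by apply: ler_sum => h _; rewrite -natrM ler_nat leq_mul2l ltnW.
  by rewrite sumr_const card_ord -[_ *+ nR]mulr_natr -natrM mulnAC.
apply: le_lt_trans (near_select (i := r) (eps := logistic (- score_gap)) _ _ _ _) _.
- exact/ltW/logistic_gt0.
- by rewrite eqxx -(logisticNC score_gap) addrK.
- by move=> h /negbTE ->.
- by move=> h; rewrite mulr_ge0 ?ler0n.
apply: le_lt_trans (logisticN_mul_lt1 gap_ge0).
by rewrite ler_pM2l ?logistic_gt0.
Qed.

Definition unit_emb d (t : token N nR) : 'cV[R]_d :=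
  \col_(k < d) if t is inl _ then (k == 0 :> nat)%:R else 0.

Lemma recall_degenerate d dh H (hs : 'I_H -> attn_head R d.+1 dh) s r :
  (N <= 1)%N -> (0 < H)%N -> (forall h, WV (hs h) = 1%:M) ->
  predicts (unit_emb d.+1) (layer_nomlp hs (input_seq (unit_emb d.+1) s r)) (inl (g r s)).
Proof.
move=> N_le1 H_gt0 V1; set X := input_seq _ s r; set Xo := layer_nomlp _ _.
have out_gt0 : 0 < Xo ord0 ord_max.
  rewrite mxE mh_attn_last2 [X _ _]mxE !mxE /= addr0.
  have term_gt0 (h : 'I_H) : 0 <
        logistic (last_score (hs h) X ord0 - last_score (hs h) X ord_max)
          * (WV (hs h) *m X) ord0 ord0
      + logistic (last_score (hs h) X ord_max - last_score (hs h) X ord0)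
          * (WV (hs h) *m X) ord0 ord_max.
    by rewrite V1 !mul1mx !mxE /= mulr1 mulr0 addr0 logistic_gt0.
  rewrite (bigD1 (Ordinal H_gt0)) //=; apply: lt_le_trans (term_gt0 (Ordinal H_gt0)) _.
  by rewrite lerDl; apply: sumr_ge0 => h _; apply/ltW/term_gt0.
move=> [y|r'] ne.
  suff y_gs : y = g r s by rewrite y_gs eqxx in ne.
  by apply: ord_inj; have := ltn_ord y; have := ltn_ord (g r s); lia.
rewrite /dotv !big_ord_recl !big1 => [|k _|k _];
  rewrite ![unit_emb _ _ _ _]mxE ?mul0r //=.
by rewrite mul1r !addr0 mxE.
Qed.

End FactualRecall.

Theorem theorem1 (R : realType) (N nR : nat) (g : 'I_nR -> 'I_N -> 'I_N) :
  (forall r, bijective (g r)) ->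
  (* 1 layer, single attention head, MLP with 3 layers and width nR,
     embedding dimension d = 4 nR log N + 1 *)
  (exists (E : token N nR -> 'cV[R]_(4 * nR * clog2 N + 1)%N)
          (hs : 'I_1 -> attn_head R (4 * nR * clog2 N + 1)%N (4 * nR * clog2 N + 1)%N)
          (m : mlp3 R (4 * nR * clog2 N + 1)%N nR),
     forall (s : 'I_N) (r : 'I_nR),
       predicts E (layer_mlp hs m (input_seq E s r)) (inl (g r s)))
  /\
  (* 1 layer, no MLP, nR heads of head dimension 4 log N,
     embedding dimension d = 4 nR log N + 4 log nR + 1 *)
  (exists (E : token N nR -> 'cV[R]_(4 * nR * clog2 N + 4 * clog2 nR + 1)%N)
          (hs : 'I_nR -> attn_head R (4 * nR * clog2 N + 4 * clog2 nR + 1)%N (4 * clog2 N)%N),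
     forall (s : 'I_N) (r : 'I_nR),
       predicts E (layer_nomlp hs (input_seq E s r)) (inl (g r s))).
Proof.
move=> _.
have [N_le1 | N_gt1] := leqP N 1.
  rewrite !addn1; split.
    exists (unit_emb R _), (fun=> Head 0 0 1%:M), (MLP3 0 0 0 0 0 0) => s r.
    by rewrite layer_mlp0; apply: recall_degenerate.
  exists (unit_emb R _), (fun=> Head 0 0 1%:M) => s r.
  by apply: recall_degenerate => //; apply: leq_ltn_trans (ltn_ord r).
have c_gt0 : (0 < clog2 N)%N by rewrite /clog2 up_log_gt0 N_gt1.
have c_mul : (nR <= nR * clog2 N)%N by rewrite leq_pmulr.
rewrite -!mulnA; split.
  exists (emb R g _), (copy_head R N nR _), (gate_mlp R N nR _) => s r.
  by apply: recall_with_mlp; have := ltn_ord r; lia.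
exists (emb R g _), (route_heads R N _ _) => s r.
by apply: recall_without_mlp; have := ltn_ord r; lia.
Qed.
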